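(* Let $\Gamma=\Lambda\times\Gamma_t$ be a finitely generated abelian group ($\Lambda$ free of rank $n$, $\Gamma_t$ finite), $T=\mathrm{Hom}(\Gamma,\mathbb{C}^* )$, and $X$ a finite list of nonzero elements of $\Lambda$ spanning a sublattice of finite index in $\Lambda$. For every $C\in\mathcal{C}(X)$, with $\mathcal{D}(C)=\{A\subseteq X: C\text{ is a connected component of }H_A\}$, $$\mu(T_C,C)=\sum_{A\in\mathcal{D}(C)}(-1)^{|A|}.$$
   Context: Each $\chi\in\Lambda$ gives a character $t\mapsto t(\chi)$ of $T$, with kernel $H_\chi=\{t\in T:t(\chi)=1\}$. For $A\subseteq X$, $H_A=\bigcap_{\chi\in A}H_\chi$ (with $H_\emptyset=T$). $\mathcal{C}(X)$ is the set of all connected components of all the sets $H_A$, $A\subseteq X$ (the layers), partially ordered by reverse inclusion; its minimal elements are the connected components of $T$. $\mu$ is the Möbius function of the poset $\mathcal{C}(X)$: $\mu(L,L)=1$, $\mu(L,M)=-\sum_{L\le N<M}\mu(L,N)$ for $L<M$, and $\mu(L,M)=0$ otherwise. For $C\in\mathcal{C}(X)$, $T_C$ is the connected component of $T$ containing $C$. *)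

From HB Require Import structures.
From mathcomp Require Import all_boot all_order all_algebra.
From mathcomp Require Import all_classical all_reals all_analysis.
From mathcomp.real_closed Require Import complex.
Unset Printing Implicit Defensive.
Import Order.TTheory GRing.Theory Num.Theory numFieldNormedType.Exports.
Local Open Scope classical_set_scope.
Local Open Scope ring_scope.

Definition Gam (n : nat) (Gt : finZmodType) : zmodType :=
  ('rV[int]_n * Gt)%type.

(* The ambient space of all functions Gamma -> C (C = R[i], R a realType),
   with the topology of pointwise convergence, C being topologised as R^2
   through z |-> (Re z, Im z). *)
Definition Amb (R : realType) (n : nat) (Gt : finZmodType) :=
  initial_topology
    (fun t : Gam n Gt -> R[i] =>
       ((fun g => (complex.Re (t g), complex.Im (t g))) : {ptws Gam n Gt -> (R * R)%type})).

Definition Tset (R : realType) (n : nat) (Gt : finZmodType) : set (Amb R n Gt) :=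
  [set t : Amb R n Gt | (forall a b : Gam n Gt, t (a + b) = t a * t b)
                        /\ (forall a : Gam n Gt, t a != 0)].

Definition chiL (n : nat) (Gt : finZmodType) (chi : 'rV[int]_n) : Gam n Gt :=
  (chi, 0).

Definition HA (R : realType) (n : nat) (Gt : finZmodType) (m : nat)
  (X : 'I_m -> 'rV[int]_n) (A : {set 'I_m}) : set (Amb R n Gt) :=
  [set t | Tset R n Gt t /\ (forall i, i \in A -> t (chiL n Gt (X i)) = 1)].

Definition is_comp_of (R : realType) (n : nat) (Gt : finZmodType) (m : nat)
  (X : 'I_m -> 'rV[int]_n) (A : {set 'I_m}) (C : set (Amb R n Gt)) : Prop :=
  exists x, HA R n Gt m X A x /\ C = connected_component (HA R n Gt m X A) x.

Definition is_layer (R : realType) (n : nat) (Gt : finZmodType) (m : nat)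
  (X : 'I_m -> 'rV[int]_n) (C : set (Amb R n Gt)) : Prop :=
  exists A : {set 'I_m}, is_comp_of R n Gt m X A C.

Definition finite_index (n m : nat) (X : 'I_m -> 'rV[int]_n) : Prop :=
  exists reps : seq 'rV[int]_n, forall lam : 'rV[int]_n,
    exists2 r, r \in reps & exists c : 'I_m -> int, lam - r = \sum_i X i *~ c i.

Definition is_mobius (U : choiceType) (P : set U) (le : U -> U -> Prop)
  (mu : U -> U -> int) : Prop :=
  [/\ (forall L, P L -> mu L L = 1),
      (forall L M, P L -> P M -> le L M -> L <> M ->
         mu L M = - \sum_(N \in [set N | P N /\ le L N /\ le N M /\ N <> M]) mu L N)
    & (forall L M, P L -> P M -> ~ le L M -> mu L M = 0)].

Definition mobius (U : choiceType) (P : set U) (le : U -> U -> Prop) : U -> U -> int :=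
  xget (fun _ _ => 0) [set mu | is_mobius U P le mu].

Definition rev_incl (U : Type) (L M : set U) : Prop := M `<=` L.

(* A layer N through a point m0 is determined by its annihilator
   ann N = {i | X i is trivial on N}: it is the component through m0 of
   H_(ann N).  Hence, for layers M `<=` L and m0 in M, the layers between L
   and M are the components through m0 of the H_(B :|: ann L), B ranging over
   the subsets of D := ann M :\: ann L.  The candidate
     mu(L, M) := sum of (-1)^|B| over the B \subset D such that M is a
                 component of H_(B :|: ann L)
   therefore sums over the interval [L, M] to the alternating sum over all
   subsets of D, which vanishes unless L = M.  So it satisfies the defining
   recursion of the Moebius function, and is it (induction on #|ann M|).
   For L = T_C the annihilator is empty, as a nonzero element of Lambda is not
   constant on a component of T (deform t along s |-> t exp(s g_j)). *)
From HB Require Import structures.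
From mathcomp Require Import all_boot all_order all_algebra.
From mathcomp Require Import all_classical all_reals all_analysis.
From mathcomp.real_closed Require Import complex.
From mathcomp Require Import ring.
Set Implicit Arguments.
Unset Strict Implicit.
Unset Printing Implicit Defensive.

Import Order.TTheory GRing.Theory Num.Theory numFieldNormedType.Exports.
Local Open Scope classical_set_scope.
Local Open Scope ring_scope.

Lemma continuous_ptws (T : topologicalType) (I : Type) (V : topologicalType)
    (h : T -> {ptws I -> V}) :
  (forall i, continuous (fun x => h x i)) -> continuous h.
Proof.
move=> hc x; apply/cvg_sup => i.
exact: (@continuous_comp_initial _ _ _ (fun f : I -> V => f i) h (hc i) x).
Qed.

Section Twist.
Variables (R : realType) (n : nat) (Gt : finZmodType).

Definition twist (x : Amb R n Gt) (j : 'I_n) (s : R) : Amb R n Gt :=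
  fun g => x g * (expR (s * (g.1 ord0 j)%:~R))%:C%C.

Lemma continuous_twist x j : continuous (twist x j).
Proof.
apply: continuous_comp_initial; apply: continuous_ptws => g s.
pose e (s : R) := expR (s * (g.1 ord0 j)%:~R).
have -> : (fun s => (complex.Re (twist x j s g), complex.Im (twist x j s g)))
    = (fun s => (complex.Re (x g) * e s, complex.Im (x g) * e s)).
  by apply: funext => s'; rewrite /twist /e; case: (x g) => a b /=; congr (_, _); simpl; ring.
have ce : continuous e.
  move=> y; apply: (continuous_comp (f := fun s : R => s * (g.1 ord0 j)%:~R)).
    exact: cvgM cvg_id (cvg_cst _).
  exact: continuous_expR.
have ceM a : (fun s => a * e s) @ s --> a * e s by apply: cvgM; [exact: cvg_cst|exact: ce].
exact: cvg_pair (ceM _) (ceM _).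
Qed.

Lemma twist0 x j : twist x j 0 = x.
Proof. by apply: funext => g; rewrite /twist mul0r expR0 mulr1. Qed.

Lemma twist_Tset x j s : Tset R n Gt x -> Tset R n Gt (twist x j s).
Proof.
move=> [xM xN]; split=> [a b|a].
  rewrite /twist xM /= mxE intrD mulrDr expRD rmorphM /=.
  by rewrite -!mulrA; congr (_ * _); rewrite mulrCA.
rewrite /twist mulf_neq0 //.
by apply/negP => /eqP /complexI /eqP; rewrite expR_eq0.
Qed.

Lemma twist_component x j s : Tset R n Gt x ->
  connected_component (Tset R n Gt) x (twist x j s).
Proof.
move=> Tx; apply: (@connected_component_max _ _ (twist x j @` setT)).
- by exists 0 => //; rewrite twist0.
- by move=> _ [t _ <-]; exact: twist_Tset.
- apply: connected_continuous_connected; last first.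
    exact/continuous_subspaceT/continuous_twist.
  by apply/connected_intervalP; rewrite -set_itv_infty_infty; exact: interval_is_interval.
- by exists s.
Qed.

Lemma component_Tset_character_neq1 x (chi : 'rV[int]_n) :
  Tset R n Gt x -> chi != 0 ->
  exists2 t, connected_component (Tset R n Gt) x t & t (chiL n Gt chi) != 1.
Proof.
move=> Tx chi0.
have [j chij] : exists j, chi ord0 j != 0.
  apply: contrapT => chi_eq0; move/eqP: chi0; apply; apply/rowP => j; rewrite mxE.
  by apply/eqP/negPn/negP => ?; apply: chi_eq0; exists j.
have [x1|x1] := eqVneq (x (chiL n Gt chi)) 1; last first.
  by exists x => //; exact: connected_component_refl.
exists (twist x j 1); first exact: twist_component.
rewrite /twist x1 !mul1r; apply/negP => /eqP /(congr1 (@complex.Re R)) /= /eqP.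
by rewrite -[X in _ == X]expR0 (inj_eq (@expR_inj R)) intr_eq0; exact/negP.
Qed.

End Twist.

Lemma sum_subsets_sign_eq0 (T : finType) (D : {set T}) (d : T) : d \in D ->
  \sum_(B : {set T} | B \subset D) (-1) ^+ #|B| = 0 :> int.
Proof.
move=> dD; pose flip (B : {set T}) := if d \in B then B :\ d else d |: B.
have flipK : involutive flip.
  move=> B; rewrite /flip; have [dB|dB] := boolP (d \in B).
    by rewrite in_setD1 eqxx /= finset.setD1K.
  by rewrite in_setU1 eqxx /= finset.setU1K.
set S := (X in X = _); suff : S = - S.
  by move/eqP; rewrite -subr_eq0 opprK -mulr2n mulrn_eq0 => /eqP.
rewrite {1}/S (reindex_inj (inv_inj flipK)) -sumrN; apply: eq_big => B.
  rewrite /flip; case: ifP => dB; last by rewrite finset.subUset finset.sub1set dD.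
  apply/idP/idP => [BdD|BD]; last exact: fintype.subset_trans (finset.subD1set _ _) BD.
  by rewrite -(finset.setD1K dB) finset.subUset finset.sub1set dD.
rewrite /flip; case: ifP => dB _; last by rewrite cardsU1 dB exprS mulN1r.
by rewrite [in RHS](cardsD1 d) dB exprS mulN1r opprK.
Qed.

Lemma fsbig_finset (R : Type) (idx : R) (op : Monoid.com_law idx) (T : finType)
    (A : {set T}) (F : T -> R) :
  \big[op/idx]_(x \in [set x | x \in A]) F x = \big[op/idx]_(x in A) F x.
Proof.
rewrite -(@bigfs _ _ _ _ (index_enum T) (fun x => x \in A) F (index_enum_uniq T)) //.
by move=> i _; rewrite mem_index_enum.
Qed.

Lemma is_mobius_unique (U : choiceType) (P : set U) (le : U -> U -> Prop)
    (rk : U -> nat) (mu1 mu2 : U -> U -> int) :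
  (forall N M, P N -> P M -> le N M -> N <> M -> (rk N < rk M)%N) ->
  is_mobius U P le mu1 -> is_mobius U P le mu2 ->
  forall L M, P L -> P M -> mu1 L M = mu2 L M.
Proof.
move=> rk_lt [r1 s1 z1] [r2 s2 z2] L M PL.
have [k] := ubnP (rk M); elim: k M => // k IH M ltk PM.
have [LM|LM] := pselect (le L M); last by rewrite z1 ?z2.
have [<-|LneM] := pselect (L = M); first by rewrite r1 ?r2.
rewrite s1 ?s2 //; congr (- _); apply: eq_fsbigr => N /set_mem [PN [_ [NM NneM]]].
by apply: (IH N _ PN); apply: leq_trans (ltnSE ltk); exact: rk_lt.
Qed.

Lemma mobiusE (U : choiceType) (P : set U) (le : U -> U -> Prop)
    (rk : U -> nat) (mu : U -> U -> int) :
  (forall N M, P N -> P M -> le N M -> N <> M -> (rk N < rk M)%N) ->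
  is_mobius U P le mu -> forall L M, P L -> P M -> mobius U P le L M = mu L M.
Proof.
move=> rk_lt mu_mob; apply: (is_mobius_unique rk_lt _ mu_mob).
exact: (@xgetI _ (fun _ _ => 0) [set mu | is_mobius U P le mu] _ mu_mob).
Qed.

Section Layers.
Variables (R : realType) (n : nat) (Gt : finZmodType) (m : nat).
Variable (X : 'I_m -> 'rV[int]_n).
Local Notation U := (set (Amb R n Gt)).
Local Notation HX := (HA R n Gt m X).
Local Notation layer := (is_layer R n Gt m X).
Local Notation comp_of := (is_comp_of R n Gt m X).
Local Notation TT := (Tset R n Gt).

Definition layer_at (A : {set 'I_m}) (y : Amb R n Gt) : U :=
  connected_component (HX A) y.

Definition ann (S : U) : {set 'I_m} :=
  [set i | `[< forall t, S t -> t (chiL n Gt (X i)) = 1 >] ]%SET.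

Lemma HA_set0 : HX finset.set0 = TT.
Proof.
by apply/seteqP; split=> [t []//|t Tt]; split=> // i; rewrite finset.in_set0.
Qed.

Lemma HA_subset (A B : {set 'I_m}) : A \subset B -> HX B `<=` HX A.
Proof. by move=> AB t [Tt Ht]; split => // i /(fintype.subsetP AB); exact: Ht. Qed.

Lemma HA_sub_Tset (A : {set 'I_m}) : HX A `<=` TT.
Proof. by move=> t []. Qed.

Lemma sub_HA_ann (S : U) : S `<=` TT -> S `<=` HX (ann S).
Proof. by move=> ST t St; split=> [|i]; [exact: ST|rewrite inE => /asboolP; apply]. Qed.

Lemma ann_subset (S S' : U) : S `<=` S' -> ann S' \subset ann S.
Proof.
move=> SS'; apply/fintype.subsetP => i; rewrite !inE => /asboolP ann_i.
by apply/asboolP => t /SS'; exact: ann_i.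
Qed.

Lemma comp_of_sub_ann A M : comp_of A M -> A \subset ann M.
Proof.
move=> [y [_ ->]]; apply/fintype.subsetP => i iA; rewrite inE; apply/asboolP => t.
by move=> /connected_component_sub [_]; apply.
Qed.

Lemma comp_of_sub_HA A M : comp_of A M -> M `<=` HX A.
Proof. by move=> [y [_ ->]]; exact: connected_component_sub. Qed.

Lemma comp_of_connected A M : comp_of A M -> connected M.
Proof. by move=> [y [_ ->]]; exact: component_connected. Qed.

Lemma comp_of_max A M K : comp_of A M -> connected K -> K `<=` HX A ->
  K `&` M !=set0 -> K `<=` M.
Proof.
move=> [y [_ ->]] Kc KH [z [Kz Mz]].
by rewrite (same_connected_component Mz); exact: connected_component_max.
Qed.

Lemma comp_ofE A N y : comp_of A N -> N y -> N = layer_at A y.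
Proof. by move=> [z [_ ->]] Ny; exact: same_connected_component. Qed.

Lemma layer_sub_Tset M : layer M -> M `<=` TT.
Proof. by move=> [A /comp_of_sub_HA MH] t /MH; exact: HA_sub_Tset. Qed.

Lemma layer_neq0 M : layer M -> M !=set0.
Proof. by move=> [A [y [Hy ->]]]; exists y; exact: connected_component_refl. Qed.

Lemma layerE N y : layer N -> N y -> N = layer_at (ann N) y.
Proof.
move=> lN Ny; have NT := layer_sub_Tset lN; case: lN => A NA.
apply/seteqP; split.
  apply: connected_component_max => //; first exact: sub_HA_ann.
  exact: comp_of_connected NA.
apply: (comp_of_max NA); first exact: component_connected.
  apply: subset_trans; first exact: connected_component_sub.
  exact: HA_subset (comp_of_sub_ann NA).
by exists y; split => //; apply: connected_component_refl; exact: sub_HA_ann.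
Qed.

Lemma layer_comp_of_ann N : layer N -> comp_of (ann N) N.
Proof.
move=> lN; have [y Ny] := layer_neq0 lN; exists y; split; last exact: layerE.
exact: sub_HA_ann (layer_sub_Tset lN) _ Ny.
Qed.

Lemma layer_inj L M : layer L -> layer M -> M `<=` L -> ann L = ann M -> L = M.
Proof.
move=> lL lM ML annLM; have [y My] := layer_neq0 lM.
by rewrite (layerE lL (ML y My)) (layerE lM My) annLM.
Qed.

Lemma component_Tset_layer x : TT x -> layer (connected_component TT x).
Proof. by move=> Tx; exists finset.set0; exists x; rewrite HA_set0. Qed.

Lemma ann_component_Tset x : (forall i, X i != 0) -> TT x ->
  ann (connected_component TT x) = finset.set0.
Proof.
move=> X0 Tx; apply/eqP; rewrite -finset.subset0; apply/fintype.subsetP => i.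
rewrite inE => /asboolP chi1.
have [t Tt] := component_Tset_character_neq1 Tx (X0 i).
by rewrite chi1 ?eqxx.
Qed.

Definition mobius_layers (L M : U) : int :=
  if `[< M `<=` L >] then
    \sum_(B : {set 'I_m} | (B \subset ann M :\: ann L) && `[< comp_of (B :|: ann L) M >])
      (-1) ^+ #|B|
  else 0.

Lemma mobius_layers_refl L : layer L -> mobius_layers L L = 1.
Proof.
move=> lL; rewrite /mobius_layers asboolT // (big_pred1 finset.set0) ?finset.cards0 //.
move=> B /=; rewrite finset.setDv finset.subset0.
apply/andP/eqP => [[/eqP //]|->]; split => //; apply/asboolP.
by rewrite finset.set0U; exact: layer_comp_of_ann.
Qed.

Lemma mobius_layers_nle L M : ~ (M `<=` L) -> mobius_layers L M = 0.
Proof. by move=> ML; rewrite /mobius_layers asboolF. Qed.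

Section Interval.
Variables (L M : U) (m0 : Amb R n Gt).
Hypotheses (lL : layer L) (lM : layer M) (ML : M `<=` L) (Mm0 : M m0).

Let D := ann M :\: ann L.
Let interval := [set N : U | layer N /\ N `<=` L /\ M `<=` N].
Let layer_above (B : {set 'I_m}) := layer_at (B :|: ann L) m0.

Lemma sub_HA_setU_ann (B : {set 'I_m}) : B \subset D -> M `<=` HX (B :|: ann L).
Proof.
move=> BD; apply: subset_trans (sub_HA_ann (layer_sub_Tset lM)) (HA_subset _).
by rewrite finset.subUset (ann_subset ML) andbT (fintype.subset_trans BD) ?finset.subsetDl.
Qed.

Lemma layer_above_m0 (B : {set 'I_m}) : B \subset D -> layer_above B m0.
Proof. by move=> BD; apply: connected_component_refl; exact: sub_HA_setU_ann. Qed.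

Lemma layer_above_layer (B : {set 'I_m}) : B \subset D -> layer (layer_above B).
Proof. by move=> BD; exists (B :|: ann L); exists m0; split=> //; exact: sub_HA_setU_ann. Qed.

Lemma layer_above_interval (B : {set 'I_m}) : B \subset D -> interval (layer_above B).
Proof.
move=> BD; split; first exact: layer_above_layer.
split; last first.
  apply: connected_component_max => //; first exact: sub_HA_setU_ann.
  by case: lM => A /comp_of_connected.
case: lL => A LA; apply: (comp_of_max LA); first exact: component_connected.
  apply: subset_trans; first exact: connected_component_sub.
  apply: HA_subset; exact: fintype.subset_trans (comp_of_sub_ann LA) (finset.subsetUr _ _).
by exists m0; split; [exact: layer_above_m0|exact: ML].
Qed.

Definition interval_anns : {set {set 'I_m}} :=
  [set A | (ann (layer_at A m0) == A) && `[< interval (layer_at A m0) >]]%SET.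

Lemma layer_at_ann_layer_above (B : {set 'I_m}) : B \subset D ->
  layer_at (ann (layer_above B)) m0 = layer_above B.
Proof. by move=> BD; rewrite -(layerE (layer_above_layer BD) (layer_above_m0 BD)). Qed.

Lemma ann_layer_above_in (B : {set 'I_m}) : B \subset D ->
  ann (layer_above B) \in interval_anns.
Proof.
move=> BD; rewrite inE layer_at_ann_layer_above // eqxx /=.
exact/asboolP/layer_above_interval.
Qed.

Lemma intervalE : interval = (layer_at ^~ m0) @` [set A | A \in interval_anns].
Proof.
apply/seteqP; split=> [N IN|_ [A + <-]]; last by rewrite /= inE => /andP[_ /asboolP].
case: (IN) => lN [_ MN]; have Nm0 := MN _ Mm0.
exists (ann N); last by rewrite -layerE.
by rewrite /= inE -(layerE lN Nm0) eqxx /=; exact/asboolP.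
Qed.

Lemma layer_at_inj : set_inj [set A | A \in interval_anns] (layer_at ^~ m0).
Proof.
move=> A1 A2 /set_mem IA1 /set_mem IA2 E.
have : A1 \in interval_anns := IA1; have : A2 \in interval_anns := IA2.
by rewrite !inE => /andP[/eqP <- _] /andP[/eqP <- _]; rewrite E.
Qed.

Lemma comp_of_layer_above (A B : {set 'I_m}) : A \in interval_anns ->
  (B \subset ann (layer_at A m0) :\: ann L) && `[< comp_of (B :|: ann L) (layer_at A m0) >]
  = (B \subset D) && (ann (layer_above B) == A).
Proof.
rewrite inE => /andP[/eqP annA /asboolP [lN [NL MN]]].
have Nm0 := MN _ Mm0.
apply/andP/andP => [[BN /asboolP BN_comp]|[BD /eqP annB]].
  have BD : B \subset D by apply: fintype.subset_trans BN (finset.setSD _ (ann_subset MN)).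
  by split=> //; rewrite /layer_above -(comp_ofE BN_comp Nm0) annA.
have <- : layer_above B = layer_at A m0 by rewrite -layer_at_ann_layer_above // annB.
split; last by apply/asboolP; exists m0; split=> //; exact: sub_HA_setU_ann.
apply/fintype.subsetP => i iB; have := fintype.subsetP BD i iB; rewrite !finset.in_setD => /andP[-> _] /=.
apply: (fintype.subsetP (comp_of_sub_ann (A := B :|: ann L) _)); last by rewrite finset.in_setU iB.
by exists m0; split=> //; exact: sub_HA_setU_ann.
Qed.

Lemma sum_mobius_layers_interval : L <> M -> \sum_(N \in interval) mobius_layers L N = 0.
Proof.
move=> LneM; rewrite intervalE fsbig_image; last exact: layer_at_inj.
rewrite fsbig_finset.
transitivity (\sum_(A in interval_anns)
    \sum_(B : {set 'I_m} | (B \subset D) && (ann (layer_above B) == A)) (-1) ^+ #|B| : int).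
  apply: eq_bigr => A IA; rewrite /mobius_layers asboolT; last first.
    by move: IA; rewrite inE => /andP[_ /asboolP [_ []]].
  by apply: eq_bigl => B; exact: comp_of_layer_above.
rewrite -(partition_big (fun B => ann (layer_above B)) (mem interval_anns)); last first.
  exact: ann_layer_above_in.
have [d dD] : exists d, d \in D.
  apply: contrapT => D0; apply: LneM; apply: layer_inj lL lM ML _.
  apply/eqP; rewrite finset.eqEsubset (ann_subset ML) /=.
  apply/fintype.subsetP => i iM; apply/negPn/negP => iL; apply: D0; exists i.
  by rewrite finset.in_setD iL iM.
exact: sum_subsets_sign_eq0 dD.
Qed.

Lemma mobius_layers_rec : L <> M -> mobius_layers L M =
  - \sum_(N \in [set N | layer N /\ @rev_incl _ L N /\ @rev_incl _ N M /\ N <> M])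
      mobius_layers L N.
Proof.
move=> LneM; have IM : interval M by split; [|split].
have fin : finite_set interval.
  by rewrite intervalE; apply: finite_image; exact: finite_finset.
have := sum_mobius_layers_interval LneM; rewrite (fsbigD1 M) //.
have -> : interval `\ M = [set N | layer N /\ @rev_incl _ L N /\ @rev_incl _ N M /\ N <> M].
  apply/seteqP; split=> N /=; rewrite /rev_incl.
    by move=> [[? [? ?]] ?]; do !split.
  by move=> [? [? [? ?]]]; do !split.
by move/eqP; rewrite addr_eq0 => /eqP.
Qed.

End Interval.

Lemma rank_ann_lt N M : layer N -> layer M -> rev_incl _ N M -> N <> M ->
  (#|ann N| < #|ann M|)%N.
Proof.
move=> lN lM MN NneM; apply: proper_card; rewrite finset.properEneq (ann_subset MN) andbT.
by apply/eqP => annNM; exact/NneM/layer_inj.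
Qed.

Lemma is_mobius_layers : is_mobius _ layer (@rev_incl _) mobius_layers.
Proof.
split; [exact: mobius_layers_refl| |by move=> L M _ _; exact: mobius_layers_nle].
move=> L M lL lM ML LneM; have [y My] := layer_neq0 lM.
exact: mobius_layers_rec My LneM.
Qed.

End Layers.

Theorem lemma5p5 (R : realType) (n : nat) (Gt : finZmodType) (m : nat)
  (X : 'I_m -> 'rV[int]_n) :
  (forall i, X i != 0) ->
  finite_index n m X ->
  forall C : set (Amb R n Gt), is_layer R n Gt m X C ->
  forall x, C x ->
  mobius _ (is_layer R n Gt m X) (@rev_incl _)
         (connected_component (Tset R n Gt) x) C
  = \sum_(A : {set 'I_m} | `[< is_comp_of R n Gt m X A C >]) (-1) ^+ #|A|.
Proof.
move=> X0 _ C lC x Cx; have Tx := layer_sub_Tset lC Cx.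
have CTC : C `<=` connected_component (Tset R n Gt) x.
  apply: connected_component_max Cx (layer_sub_Tset lC) _.
  by case: lC => A /comp_of_connected.
rewrite (mobiusE (@rank_ann_lt _ _ _ _ X) (@is_mobius_layers _ _ _ _ X)) //;
  last exact: component_Tset_layer.
rewrite /mobius_layers asboolT // ann_component_Tset // finset.setD0.
apply: eq_bigl => B; rewrite finset.setU0.
by apply/andP/idP => [[_ //]|CB]; split=> //; exact/comp_of_sub_ann/asboolP.
Qed.
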